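(* Let $n\ge2$, $1\le i<j\le n$, $\nu>0$, and let $X_{(1)}\le\dots\le X_{(n)}$ be the order statistics of $n$ i.i.d. random variables uniform on $[0,1]$. Then $$\mathbb{E}\big[X_{(i)}^\nu X_{(j)}^\nu\big]=\frac{\Gamma(n+1)\,\Gamma(\nu+1)\,\Gamma(\nu+i)}{\Gamma(i)\,\Gamma(n+1-j)}\sum_{k=0}^{\infty}(-1)^k\frac{\Gamma(n+k+1-j)}{\Gamma(k+1)\,\Gamma(\nu+1-k)\,\Gamma(\nu+n+k+1)},$$ where $1/\Gamma(\nu+1-k)$ is interpreted as $0$ whenever $\nu+1-k$ is a nonpositive integer.
   Context: $\Gamma$ denotes the Euler gamma function. The joint density of $(X_{(i)},X_{(j)})$ for $i<j$ is $\frac{\Gamma(n+1)}{\Gamma(i)\Gamma(j-i)\Gamma(n+1-j)}u^{i-1}(v-u)^{j-i-1}(1-v)^{n-j}$ on $0\le u\le v\le1$. *)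

From Stdlib Require Import Reals Lra Lia Factorial ClassicalEpsilon.
Open Scope R_scope.

(* poch x m = x (x+1) ... (x+m)   (m+1 factors) *)
Fixpoint poch (x : R) (m : nat) : R :=
  match m with
  | O => x
  | S m' => poch x m' * (x + INR m)
  end.

(* Gauss' product definition of the Gamma function:
   Gamma x = lim_{m->oo} m! m^x / (x (x+1) ... (x+m)),  x not in {0,-1,-2,...} *)
Definition gauss_seq (x : R) (m : nat) : R :=
  INR (fact (S m)) * Rpower (INR (S m)) x / poch x (S m).

Definition Gamma (x : R) : R :=
  epsilon (inhabits 0) (fun l => Un_cv (gauss_seq x) l).

(* Reciprocal Gamma 1/Gamma (entire; equal to 0 at the nonpositive integers),
   defined as the limit of the reciprocal Gauss sequence. *)
Definition rgauss_seq (x : R) (m : nat) : R :=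
  poch x (S m) / (INR (fact (S m)) * Rpower (INR (S m)) x).

Definition RGamma (x : R) : R :=
  epsilon (inhabits 0) (fun l => Un_cv (rgauss_seq x) l).

Definition rpow (u a : R) : R := if Rle_dec u 0 then 0 else Rpower u a.

Definition has_RInt (f : R -> R) (a b I : R) : Prop :=
  exists pr : Riemann_integrable f a b, RiemannInt pr = I.

(* joint density of (X_(i), X_(j)), i < j, for n iid U[0,1] *)
Definition os_density (n i j : nat) (u v : R) : R :=
  Gamma (INR n + 1) / (Gamma (INR i) * Gamma (INR j - INR i) * Gamma (INR n + 1 - INR j))
  * u ^ (i - 1) * (v - u) ^ (j - i - 1) * (1 - v) ^ (n - j).

(* E[X_(i)^nu X_(j)^nu] = int_0^1 ( int_0^v dens(u,v) u^nu v^nu du ) dv :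
   the iterated integrals exist and the expectation equals E *)
Definition os_moment_is (n i j : nat) (nu E : R) : Prop :=
  exists g : R -> R,
    (forall v, 0 <= v <= 1 ->
       has_RInt (fun u => os_density n i j u v * rpow u nu * rpow v nu) 0 v (g v))
    /\ has_RInt g 0 1 E.

Definition series_term (n j : nat) (nu : R) (k : nat) : R :=
  (-1) ^ k * Gamma (INR n + INR k + 1 - INR j)
  / (Gamma (INR k + 1) * Gamma (nu + INR n + INR k + 1))
  * RGamma (nu + 1 - INR k).

From Stdlib Require Import Reals Lra Lia Factorial ClassicalEpsilon.
From Coquelicot Require Import Coquelicot.
Open Scope R_scope.

(* Closed forms for both sides.  With [S := Gamma(n+1-j) Gamma(2nu+j) /
   (Gamma(nu+1) Gamma(nu+j) Gamma(2nu+n+1))]: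

   - Series side.  Since [1/Gamma(nu+1-k) = (-1)^k (-nu)_k / Gamma(nu+1)], the
     k-th term is a constant times the hypergeometric term of
     [2F1(-nu, n-j+1; nu+n+1; 1)], and Gauss' summation theorem (proved here for
     a natural-number parameter b, by induction on b through a telescoping
     contiguous relation) shows that the series sums to [S].
   - Integral side.  The inner integral in [u] is an incomplete Beta integral
     [int_0^v u^a (v-u)^d du = v^(a+d+1) B(a+1,d+1)], the outer one a complete
     Beta integral; so the moment equals
     [Gamma(n+1) Gamma(nu+i) Gamma(2nu+j) / (Gamma(i) Gamma(nu+j) Gamma(2nu+n+1))]. *)

Fixpoint rising (x : R) (k : nat) : R :=
  match k with
  | O => 1
  | S k' => rising x k' * (x + INR k')
  end.

Lemma rising_pos x k : 0 < x -> 0 < rising x k.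
Proof.
  intros Hx; induction k as [|k IH]; simpl; [lra|].
  pose proof (pos_INR k); apply Rmult_lt_0_compat; lra.
Qed.

Lemma rising_succ_l x k : rising x (S k) = x * rising (x + 1) k.
Proof.
  induction k as [|k IH]; [simpl; ring|].
  change (rising x (S (S k))) with (rising x (S k) * (x + INR (S k))).
  rewrite IH; cbn [rising]; rewrite S_INR; ring.
Qed.

Lemma rising_zero k : rising 0 (S k) = 0.
Proof. rewrite rising_succ_l; ring. Qed.

Lemma rising_one k : rising 1 k = INR (fact k).
Proof.
  induction k as [|k IH]; [reflexivity|].
  simpl rising; rewrite IH.
  change (fact (S k)) with (S k * fact k)%nat; rewrite mult_INR, S_INR; ring.
Qed.

(** The factor [x (x-1) ... (x-k+1)] of [1/Gamma(x+1-k)] is [(-1)^k (-x)_k]. *)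
Lemma rising_reflect x k : rising (x + 1 - INR k) k = (-1) ^ k * rising (- x) k.
Proof.
  induction k as [|k IH]; [simpl; ring|].
  rewrite rising_succ_l.
  replace (x + 1 - INR (S k) + 1) with (x + 1 - INR k) by (rewrite S_INR; ring).
  rewrite IH; cbn [rising pow]; rewrite S_INR; ring.
Qed.

Lemma poch_rising x m : poch x m = rising x (S m).
Proof. induction m as [|m IH]; simpl; [ring|]. now rewrite IH. Qed.

Lemma eventually_INR_gt c : eventually (fun m => c < INR m).
Proof. apply (proj2 (is_lim_seq_spec INR p_infty) is_lim_seq_INR). Qed.

Lemma lim_inv_shift c : is_lim_seq (fun m => / (INR m + c)) 0.
Proof.
  assert (H : is_lim_seq (fun m => INR m + c) p_infty).
  { apply (is_lim_seq_plus INR (fun _ => c) p_infty c p_infty);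
      [apply is_lim_seq_INR | apply is_lim_seq_const | reflexivity]. }
  apply (is_lim_seq_inv _ _ H); discriminate.
Qed.

Lemma lim_ratio c d : is_lim_seq (fun m => (INR m + d) / (INR m + c)) 1.
Proof.
  apply is_lim_seq_ext_loc with (fun m => 1 + (d - c) * / (INR m + c)).
  { destruct (eventually_INR_gt (- c)) as [N HN].
    exists N; intros m Hm; specialize (HN m Hm); field; lra. }
  replace (Finite 1) with (Finite (1 + (d - c) * 0)) by (f_equal; ring).
  apply is_lim_seq_plus'; [apply is_lim_seq_const|].
  apply is_lim_seq_mult'; [apply is_lim_seq_const | apply lim_inv_shift].
Qed.

(** [x (m+1)/(m+x+2) --> x]: the ratio of consecutive Gauss sequences. *)
Lemma lim_gauss_ratio x : is_lim_seq (fun m => x * ((INR m + 1) / (INR m + (x + 2)))) x.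
Proof.
  replace (Finite x) with (Finite (x * 1)) by (f_equal; ring).
  apply is_lim_seq_mult'; [apply is_lim_seq_const | apply lim_ratio].
Qed.

Lemma Gamma_lim x l : Un_cv (gauss_seq x) l -> Gamma x = l.
Proof.
  intros H; apply (UL_sequence (gauss_seq x)); auto.
  apply (epsilon_spec (inhabits 0) (fun l => Un_cv (gauss_seq x) l)); eauto.
Qed.

Lemma RGamma_lim x l : Un_cv (rgauss_seq x) l -> RGamma x = l.
Proof.
  intros H; apply (UL_sequence (rgauss_seq x)); auto.
  apply (epsilon_spec (inhabits 0) (fun l => Un_cv (rgauss_seq x) l)); eauto.
Qed.

Lemma exp_le_mono a b : a <= b -> exp a <= exp b.
Proof. intros [H|H]; [left; now apply exp_increasing | subst; lra]. Qed.

(** Two Bernoulli-type bounds on [N^x], used to show that Gauss' sequence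
    increases and is bounded by a decreasing sequence when [0 < x <= 1]. *)
Lemma Rpower_bernoulli_lower N x : 0 < N -> 0 <= x ->
  Rpower N x * (1 + x / (N + 1)) <= Rpower (N + 1) x.
Proof.
  intros HN Hx. set (y := N / (N + 1)).
  assert (Hy : 0 < y) by (unfold y; apply Rdiv_lt_0_compat; lra).
  assert (E : Rpower N x = Rpower (N + 1) x * Rpower y x).
  { rewrite Rpower_mult_distr by lra. f_equal. unfold y; field; lra. }
  assert (Hln : ln y <= - / (N + 1)).
  { replace (- / (N + 1)) with (y - 1) by (unfold y; field; lra).
    rewrite <- (ln_exp (y - 1)). apply ln_le; auto.
    pose proof (exp_ineq1_le (y - 1)); lra. }
  assert (Hr : Rpower y x <= exp (- (x / (N + 1)))).
  { unfold Rpower. apply exp_le_mono. unfold Rdiv. nra. }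
  assert (Hq : exp (- (x / (N + 1))) * (1 + x / (N + 1)) <= 1).
  { pose proof (exp_ineq1_le (x / (N + 1))).
    assert (exp (- (x / (N + 1))) * exp (x / (N + 1)) = 1)
      by (rewrite <- exp_plus, Rplus_opp_l; apply exp_0).
    pose proof (exp_pos (- (x / (N + 1)))). nra. }
  assert (0 <= x / (N + 1)) by (apply Rdiv_le_0_compat; lra).
  assert (0 < Rpower (N + 1) x) by apply exp_pos.
  assert (Rpower y x * (1 + x / (N + 1)) <= 1).
  { eapply Rle_trans; [apply Rmult_le_compat_r; [lra | apply Hr] | apply Hq]. }
  rewrite E; nra.
Qed.

Lemma Rpower_bernoulli_upper N x : 0 < N -> 0 <= x <= 1 ->
  Rpower (N + 1) x <= Rpower N x * (1 + x / N).
Proof.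
  intros HN Hx.
  destruct (MVT_cor2 (fun t => Rpower t x) (fun t => x * Rpower t (x - 1)) N (N + 1))
    as [c [Hc1 Hc2]]; [lra | intros c Hc; apply derivable_pt_lim_power; lra |].
  (* the derivative [x t^(x-1)] is nonincreasing because [x - 1 <= 0] *)
  assert (Rpower c (x - 1) <= Rpower N (x - 1)).
  { unfold Rpower. apply exp_le_mono. assert (ln N <= ln c) by (apply ln_le; lra). nra. }
  assert (E : Rpower N x = Rpower N (x - 1) * N).
  { replace x with ((x - 1) + 1) at 1 by ring. rewrite Rpower_plus, Rpower_1; lra. }
  replace (Rpower N x * (1 + x / N)) with (Rpower N x + x * Rpower N (x - 1))
    by (rewrite E; field; lra).
  nra.
Qed.

Lemma le_scale_ratio g n d : 0 <= g -> 0 < d -> d <= n -> g <= g * (n / d).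
Proof.
  intros Hg Hd Hdn. rewrite <- (Rmult_1_r g) at 1. apply Rmult_le_compat_l; auto.
  apply Rcomplements.Rle_div_r; lra.
Qed.

Lemma scale_ratio_le g n d : 0 <= g -> 0 < d -> n <= d -> g * (n / d) <= g.
Proof.
  intros Hg Hd Hdn. rewrite <- (Rmult_1_r g) at 2. apply Rmult_le_compat_l; auto.
  apply Rcomplements.Rle_div_l; lra.
Qed.

Lemma gauss_seq_pos x m : 0 < x -> 0 < gauss_seq x m.
Proof.
  intros Hx. unfold gauss_seq. rewrite poch_rising.
  apply Rdiv_lt_0_compat; [|apply rising_pos; lra].
  apply Rmult_lt_0_compat; [apply lt_0_INR, lt_O_fact | apply exp_pos].
Qed.

Lemma gauss_seq_succ x m : 0 < x ->
  gauss_seq x (S m) = gauss_seq x m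
    * ((INR m + 2) * Rpower (INR m + 2) x / ((x + INR m + 2) * Rpower (INR m + 1) x)).
Proof.
  intros Hx. unfold gauss_seq. rewrite !poch_rising.
  change (rising x (S (S (S m)))) with (rising x (S (S m)) * (x + INR (S (S m)))).
  change (fact (S (S m))) with (S (S m) * fact (S m))%nat.
  rewrite mult_INR, !S_INR.
  pose proof (rising_pos x (S (S m)) Hx). pose proof (lt_0_INR _ (lt_O_fact (S m))).
  pose proof (exp_pos (x * ln (INR m + 1))). pose proof (exp_pos (x * ln (INR m + 1 + 1))).
  pose proof (pos_INR m). unfold Rpower in *.
  replace (INR m + 1 + 1) with (INR m + 2) in * by ring.
  field. repeat split; lra.
Qed.

Lemma gauss_seq_growing x : 0 < x -> Un_growing (gauss_seq x).
Proof.
  intros Hx m. rewrite gauss_seq_succ by lra.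
  pose proof (gauss_seq_pos x m Hx). pose proof (pos_INR m).
  pose proof (Rpower_bernoulli_lower (INR m + 1) x ltac:(lra) ltac:(lra)) as Hb.
  replace (INR m + 1 + 1) with (INR m + 2) in Hb by ring.
  assert (0 < Rpower (INR m + 1) x) by apply exp_pos.
  apply le_scale_ratio; [lra | apply Rmult_lt_0_compat; lra |].
  replace ((x + INR m + 2) * Rpower (INR m + 1) x)
    with ((INR m + 2) * (Rpower (INR m + 1) x * (1 + x / (INR m + 2)))) by (field; lra).
  apply Rmult_le_compat_l; lra.
Qed.

(** A decreasing majorant of Gauss' sequence, valid for [0 < x <= 1]. *)
Definition gauss_upper (x : R) (m : nat) : R :=
  gauss_seq x m * (Rpower (INR m + 2) x / Rpower (INR m + 1) x).

Lemma gauss_seq_le_upper x m : 0 < x -> gauss_seq x m <= gauss_upper x m.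
Proof.
  intros Hx. pose proof (gauss_seq_pos x m Hx). pose proof (pos_INR m).
  apply le_scale_ratio; [lra | apply exp_pos |].
  apply Rle_Rpower_l; lra.
Qed.

Lemma gauss_upper_decr x m : 0 < x <= 1 -> gauss_upper x (S m) <= gauss_upper x m.
Proof.
  intros Hx. unfold gauss_upper. rewrite gauss_seq_succ by lra. rewrite S_INR.
  pose proof (gauss_seq_pos x m (proj1 Hx)). pose proof (pos_INR m).
  pose proof (Rpower_bernoulli_upper (INR m + 2) x ltac:(lra) ltac:(lra)) as Hb.
  replace (INR m + 2 + 1) with (INR m + 1 + 2) in Hb by ring.
  replace (INR m + 1 + 1) with (INR m + 2) by ring.
  assert (0 < Rpower (INR m + 1) x) by apply exp_pos.
  assert (0 < Rpower (INR m + 2) x) by apply exp_pos.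
  replace (gauss_seq x m * ((INR m + 2) * Rpower (INR m + 2) x
             / ((x + INR m + 2) * Rpower (INR m + 1) x))
           * (Rpower (INR m + 1 + 2) x / Rpower (INR m + 2) x))
    with (gauss_seq x m * (Rpower (INR m + 2) x / Rpower (INR m + 1) x)
          * ((INR m + 2) * Rpower (INR m + 1 + 2) x
             / ((x + INR m + 2) * Rpower (INR m + 2) x))) by (field; lra).
  apply scale_ratio_le.
  - left; apply Rmult_lt_0_compat; [lra | apply Rdiv_lt_0_compat; lra].
  - apply Rmult_lt_0_compat; lra.
  - replace ((x + INR m + 2) * Rpower (INR m + 2) x)
      with ((INR m + 2) * (Rpower (INR m + 2) x * (1 + x / (INR m + 2)))) by (field; lra).
    apply Rmult_le_compat_l; lra.
Qed.

Lemma gauss_cv_unit x : 0 < x <= 1 -> exists l, Un_cv (gauss_seq x) l /\ 0 < l.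
Proof.
  intros Hx.
  assert (Hbound : forall m, gauss_seq x m <= gauss_upper x O).
  { intros m. eapply Rle_trans; [apply gauss_seq_le_upper; lra|].
    induction m as [|m IH]; [lra|]. eapply Rle_trans; [apply gauss_upper_decr|]; auto. }
  destruct (growing_cv _ (gauss_seq_growing x (proj1 Hx))) as [l Hl].
  { exists (gauss_upper x O). intros y [m ->]. apply Hbound. }
  exists l; split; auto.
  apply Rlt_le_trans with (gauss_seq x O); [apply gauss_seq_pos; lra|].
  apply growing_ineq; auto. apply gauss_seq_growing; lra.
Qed.

Lemma poch_shift x m : poch (x + 1) m * x = poch x m * (x + INR m + 1).
Proof.
  rewrite !poch_rising, Rmult_comm, <- rising_succ_l.
  change (rising x (S (S m))) with (rising x (S m) * (x + INR (S m))).
  rewrite S_INR; ring.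
Qed.

(** Shifting the argument by one multiplies Gauss' sequences by a ratio
    tending to [x]; this yields [Gamma (x+1) = x Gamma x]. *)
Lemma gauss_seq_shift x m : 0 < x ->
  gauss_seq (x + 1) m = gauss_seq x m * (x * ((INR m + 1) / (INR m + (x + 2)))).
Proof.
  intros Hx. unfold gauss_seq.
  assert (HN : 0 < INR (S m)) by (apply lt_0_INR; lia).
  rewrite Rpower_plus, Rpower_1 by lra.
  assert (Hp : poch (x + 1) (S m) = poch x (S m) * (x + INR (S m) + 1) / x)
    by (rewrite <- poch_shift; field; lra).
  rewrite Hp, poch_rising. rewrite S_INR in *.
  pose proof (rising_pos x (S (S m)) Hx). pose proof (pos_INR m).
  field. repeat split; lra.
Qed.

Lemma gauss_cv x : 0 < x -> exists l, Un_cv (gauss_seq x) l /\ 0 < l.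
Proof.
  intros Hx. destruct (eventually_INR_gt x) as [N HN]. specialize (HN N (le_n N)).
  revert x Hx HN. induction N as [|N IH]; intros x Hx HN; [simpl in HN; lra|].
  destruct (Rle_lt_dec x 1) as [H1|H1]; [apply gauss_cv_unit; lra|].
  destruct (IH (x - 1)) as [l [Hl Hl0]]; [lra | rewrite S_INR in HN; lra|].
  exists ((x - 1) * l); split; [|apply Rmult_lt_0_compat; lra].
  apply is_lim_seq_Reals. apply is_lim_seq_Reals in Hl.
  apply is_lim_seq_ext
    with (fun m => gauss_seq (x - 1) m * ((x - 1) * ((INR m + 1) / (INR m + ((x - 1) + 2))))).
  { intros m. rewrite <- gauss_seq_shift by lra. f_equal; ring. }
  replace (Finite ((x - 1) * l)) with (Finite (l * (x - 1))) by (f_equal; ring).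
  apply is_lim_seq_mult'; auto. apply lim_gauss_ratio.
Qed.

Lemma Gamma_cv x : 0 < x -> Un_cv (gauss_seq x) (Gamma x) /\ 0 < Gamma x.
Proof. intros Hx. destruct (gauss_cv x Hx) as [l [Hl Hl0]]. now rewrite (Gamma_lim x l Hl). Qed.

Lemma Gamma_pos x : 0 < x -> 0 < Gamma x.
Proof. intros Hx. apply (Gamma_cv x Hx). Qed.

Lemma Gamma_succ x : 0 < x -> Gamma (x + 1) = x * Gamma x.
Proof.
  intros Hx. destruct (Gamma_cv x Hx) as [H _]. apply Gamma_lim.
  apply is_lim_seq_Reals. apply is_lim_seq_Reals in H.
  apply is_lim_seq_ext with (fun m => gauss_seq x m * (x * ((INR m + 1) / (INR m + (x + 2))))).
  { intros m. now rewrite gauss_seq_shift. }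
  replace (Finite (x * Gamma x)) with (Finite (Gamma x * x)) by (f_equal; ring).
  apply is_lim_seq_mult'; auto. apply lim_gauss_ratio.
Qed.

Lemma Gamma_one : Gamma 1 = 1.
Proof.
  apply Gamma_lim. apply is_lim_seq_Reals.
  apply is_lim_seq_ext with (fun m => (INR m + 1) / (INR m + 2)); [|apply lim_ratio].
  intros m. unfold gauss_seq. rewrite poch_rising, rising_one, Rpower_1 by (apply lt_0_INR; lia).
  change (fact (S (S m))) with (S (S m) * fact (S m))%nat. rewrite mult_INR.
  pose proof (lt_0_INR _ (lt_O_fact (S m))). rewrite !S_INR. pose proof (pos_INR m).
  field. lra.
Qed.

Lemma Gamma_nat q : Gamma (INR q + 1) = INR (fact q).
Proof.
  induction q as [|q IH]; [simpl; rewrite Rplus_0_l; apply Gamma_one|].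
  rewrite S_INR, Gamma_succ, IH by (pose proof (pos_INR q); lra).
  change (fact (S q)) with (S q * fact q)%nat. rewrite mult_INR, S_INR. ring.
Qed.

Lemma Gamma_rising x k : 0 < x -> Gamma (x + INR k) = Gamma x * rising x k.
Proof.
  intros Hx. induction k as [|k IH]; [simpl; rewrite Rplus_0_r; ring|].
  rewrite S_INR. replace (x + (INR k + 1)) with ((x + INR k) + 1) by ring.
  rewrite Gamma_succ, IH by (pose proof (pos_INR k); lra). simpl rising. ring.
Qed.

(** The reciprocal Gauss sequence satisfies the same recursion for every [x],
    so [1/Gamma] extends to the left of [0]. *)
Lemma rgauss_seq_shift x m : INR m + (x + 2) <> 0 ->
  rgauss_seq x m = rgauss_seq (x + 1) m * (x * ((INR m + 1) / (INR m + (x + 2)))).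
Proof.
  intros Hm. unfold rgauss_seq.
  assert (HN : 0 < INR (S m)) by (apply lt_0_INR; lia).
  rewrite Rpower_plus, Rpower_1 by lra.
  pose proof (lt_0_INR _ (lt_O_fact (S m))). pose proof (exp_pos (x * ln (INR (S m)))).
  assert (E := poch_shift x (S m)). fold (Rpower (INR (S m)) x) in *. rewrite S_INR in *.
  transitivity (poch (x + 1) (S m) * x
     / (INR (fact (S m)) * (Rpower (INR m + 1) x * (INR m + 1)))
     * ((INR m + 1) / (INR m + (x + 2)))).
  - rewrite E. field. repeat split; lra.
  - field. repeat split; lra.
Qed.

Lemma rgauss_cv_pred x l : Un_cv (rgauss_seq (x + 1)) l -> Un_cv (rgauss_seq x) (x * l).
Proof.
  intros H. apply is_lim_seq_Reals. apply is_lim_seq_Reals in H.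
  apply is_lim_seq_ext_loc
    with (fun m => rgauss_seq (x + 1) m * (x * ((INR m + 1) / (INR m + (x + 2))))).
  { destruct (eventually_INR_gt (- (x + 2))) as [N HN]. exists N. intros m Hm.
    specialize (HN m Hm). symmetry. apply rgauss_seq_shift. lra. }
  replace (Finite (x * l)) with (Finite (l * x)) by (f_equal; ring).
  apply is_lim_seq_mult'; auto. apply lim_gauss_ratio.
Qed.

Lemma rgauss_cv_pos x : 0 < x -> Un_cv (rgauss_seq x) (/ Gamma x).
Proof.
  intros Hx. destruct (Gamma_cv x Hx) as [H Hp].
  apply is_lim_seq_Reals. apply is_lim_seq_Reals in H.
  apply is_lim_seq_ext with (fun m => / gauss_seq x m).
  { intros m. pose proof (gauss_seq_pos x m Hx). unfold gauss_seq, rgauss_seq in *.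
    pose proof (lt_0_INR _ (lt_O_fact (S m))). pose proof (exp_pos (x * ln (INR (S m)))).
    rewrite poch_rising in *. pose proof (rising_pos x (S (S m)) Hx).
    unfold Rpower. field. repeat split; lra. }
  apply (is_lim_seq_inv _ _ H). intro E; injection E; lra.
Qed.

Lemma RGamma_shift_down x k : 0 < x -> RGamma (x - INR k) = rising (x - INR k) k / Gamma x.
Proof.
  intros Hx. apply RGamma_lim. induction k as [|k IH].
  - simpl. rewrite Rminus_0_r. unfold Rdiv. rewrite Rmult_1_l. now apply rgauss_cv_pos.
  - rewrite rising_succ_l.
    replace (x - INR (S k) + 1) with (x - INR k) by (rewrite S_INR; ring).
    unfold Rdiv. rewrite Rmult_assoc. apply rgauss_cv_pred.
    replace (x - INR (S k) + 1) with (x - INR k) by (rewrite S_INR; ring). apply IH.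
Qed.

(** Terms of the hypergeometric series [2F1(a, b; c; 1)]. *)
Definition hyp_term (a b c : R) (k : nat) : R :=
  rising a k * rising b k / (INR (fact k) * rising c k).

(** Boundary term left over when the contiguous relation below is summed. *)
Definition hyp_rem (a b c : R) (K : nat) : R :=
  rising a (S K) * rising b K / (INR (fact K) * rising c K).

(** Contiguous relation between [2F1(a,b;c;1)] and [2F1(a,b-1;c;1)], termwise:
    the combination below telescopes. *)
Lemma hyp_contiguous a b c k : 0 < c ->
  (a + b - c) * hyp_term a b c k + (c - b) * hyp_term a (b - 1) c k =
  hyp_rem a b c k - match k with O => 0 | S k' => hyp_rem a b c k' end.
Proof.
  intros Hc. unfold hyp_term, hyp_rem. destruct k as [|k]; [simpl; field|].
  rewrite (rising_succ_l (b - 1)). replace (b - 1 + 1) with b by ring.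
  cbn [rising]. change (fact (S k)) with (S k * fact k)%nat. rewrite mult_INR.
  pose proof (lt_0_INR _ (lt_O_fact k)). pose proof (rising_pos c k Hc). pose proof (pos_INR k).
  rewrite !S_INR. field. repeat split; lra.
Qed.

Lemma hyp_contiguous_sum a b c K : 0 < c ->
  (a + b - c) * sum_f_R0 (hyp_term a b c) K + (c - b) * sum_f_R0 (hyp_term a (b - 1) c) K
  = hyp_rem a b c K.
Proof.
  intros Hc. induction K as [|K IH]; simpl.
  - rewrite (hyp_contiguous a b c 0 Hc). ring.
  - pose proof (hyp_contiguous a b c (S K) Hc). lra.
Qed.

Lemma hyp_rem_succ a b c K : 0 < c ->
  hyp_rem a b c (S K)
  = hyp_rem a b c K * ((a + INR (S K)) * (b + INR K) / (INR (S K) * (c + INR K))).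
Proof.
  intros Hc. unfold hyp_rem. cbn [rising].
  change (fact (S K)) with (S K * fact K)%nat. rewrite mult_INR.
  pose proof (lt_0_INR _ (lt_O_fact K)). pose proof (rising_pos c K Hc). pose proof (pos_INR K).
  assert (0 < INR (S K)) by (apply lt_0_INR; lia).
  field. repeat split; lra.
Qed.

Lemma hyp_rem_bound a b c K0 : a <= 0 -> 0 < b -> b + 1 <= c -> - a <= INR K0 ->
  forall t, Rabs (hyp_rem a b c (K0 + t))
            <= Rabs (hyp_rem a b c K0) * (b + INR K0) / (b + INR (K0 + t)).
Proof.
  intros Ha Hb Hc HK t. pose proof (pos_INR K0).
  induction t as [|t IH]; [rewrite Nat.add_0_r; right; field; lra|].
  rewrite Nat.add_succ_r, hyp_rem_succ by lra. set (K := (K0 + t)%nat) in *.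
  assert (HKK : INR K0 <= INR K) by (apply le_INR; unfold K; lia).
  rewrite Rabs_mult, S_INR.
  assert (Hr : Rabs ((a + (INR K + 1)) * (b + INR K) / ((INR K + 1) * (c + INR K)))
               <= (b + INR K) / (b + (INR K + 1))).
  { rewrite Rabs_right.
    2: { apply Rle_ge, Rdiv_le_0_compat; [apply Rmult_le_pos | apply Rmult_lt_0_compat]; lra. }
    apply Rmult_le_reg_r with ((INR K + 1) * (c + INR K) * (b + (INR K + 1))).
    { apply Rmult_lt_0_compat; [apply Rmult_lt_0_compat|]; lra. }
    assert ((a + INR K + 1) * (b + INR K + 1) <= (INR K + 1) * (c + INR K)) by nra.
    field_simplify; [nra | lra | lra]. }
  eapply Rle_trans;
    [apply Rmult_le_compat; [apply Rabs_pos | apply Rabs_pos | apply IH | apply Hr]|].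
  right. field. split; lra.
Qed.

Lemma hyp_rem_lim a b c : a <= 0 -> 0 < b -> b + 1 <= c -> is_lim_seq (hyp_rem a b c) 0.
Proof.
  intros Ha Hb Hc.
  destruct (eventually_INR_gt (- a)) as [K0 HK0]. specialize (HK0 K0 (le_n _)).
  set (C := Rabs (hyp_rem a b c K0) * (b + INR K0)).
  apply is_lim_seq_le_le_loc with (fun K => - (C * / (INR K + b))) (fun K => C * / (INR K + b)).
  - exists K0. intros K HK. replace K with (K0 + (K - K0))%nat by lia.
    pose proof (hyp_rem_bound a b c K0 Ha Hb Hc ltac:(lra) (K - K0)) as H.
    replace (b + INR (K0 + (K - K0))) with (INR (K0 + (K - K0)) + b) in H by ring.
    apply Rabs_le_between. unfold C, Rdiv in *.
    rewrite Rmult_assoc in H |- *. auto.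
  - replace (Finite 0) with (Rbar_opp (Finite (C * 0))) by (simpl; f_equal; ring).
    apply -> is_lim_seq_opp. apply is_lim_seq_mult'; [apply is_lim_seq_const | apply lim_inv_shift].
  - replace (Finite 0) with (Finite (C * 0)) by (f_equal; ring).
    apply is_lim_seq_mult'; [apply is_lim_seq_const | apply lim_inv_shift].
Qed.

(** Induction on [b]: the contiguous relation expresses the [b+1] series through
    the [b] series and a boundary term tending to [0]. *)
Theorem gauss_sum a c (b : nat) : a <= 0 -> INR b + 1 <= c ->
  infinite_sum (hyp_term a (INR b) c)
    (Gamma c * Gamma (c - a - INR b) / (Gamma (c - a) * Gamma (c - INR b))).
Proof.
  intros Ha. induction b as [|b IH]; intros Hb.
  - simpl INR in *. rewrite !Rminus_0_r.
    pose proof (Gamma_pos c ltac:(lra)). pose proof (Gamma_pos (c - a) ltac:(lra)).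
    replace (Gamma c * Gamma (c - a) / (Gamma (c - a) * Gamma c)) with 1 by (field; lra).
    assert (Hsum : forall K, sum_f_R0 (hyp_term a 0 c) K = 1).
    { induction K as [|K IHK]; simpl sum_f_R0.
      - unfold hyp_term; simpl; field.
      - rewrite IHK. unfold hyp_term. rewrite rising_zero. unfold Rdiv. ring. }
    intros eps Heps. exists O. intros K _. rewrite Hsum. unfold R_dist.
    rewrite Rminus_diag, Rabs_R0; lra.
  - rewrite S_INR in Hb |- *. pose proof (pos_INR b).
    specialize (IH ltac:(lra)).
    set (G := Gamma c * Gamma (c - a - INR b) / (Gamma (c - a) * Gamma (c - INR b))) in IH.
    assert (E1 : Gamma (c - a - INR b) = (c - a - (INR b + 1)) * Gamma (c - a - (INR b + 1)))
      by (rewrite <- Gamma_succ by lra; f_equal; ring).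
    assert (E2 : Gamma (c - INR b) = (c - (INR b + 1)) * Gamma (c - (INR b + 1)))
      by (rewrite <- Gamma_succ by lra; f_equal; ring).
    pose proof (Gamma_pos c ltac:(lra)). pose proof (Gamma_pos (c - a) ltac:(lra)).
    pose proof (Gamma_pos (c - a - (INR b + 1)) ltac:(lra)).
    pose proof (Gamma_pos (c - (INR b + 1)) ltac:(lra)).
    replace (Gamma c * Gamma (c - a - (INR b + 1)) / (Gamma (c - a) * Gamma (c - (INR b + 1))))
      with ((0 - (c - (INR b + 1)) * G) / (a + (INR b + 1) - c))
      by (unfold G; rewrite E1, E2; field; repeat split; lra).
    apply is_lim_seq_Reals. apply is_lim_seq_Reals in IH.
    apply is_lim_seq_ext with (fun K => (hyp_rem a (INR b + 1) c K
        - (c - (INR b + 1)) * sum_f_R0 (hyp_term a (INR b) c) K) / (a + (INR b + 1) - c)).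
    { intros K. rewrite <- (hyp_contiguous_sum a (INR b + 1) c K) by lra.
      replace (INR b + 1 - 1) with (INR b) by ring. field. lra. }
    apply is_lim_seq_div'; [| apply is_lim_seq_const | lra].
    apply is_lim_seq_minus'; [apply hyp_rem_lim; lra|].
    apply is_lim_seq_mult'; [apply is_lim_seq_const | exact IH].
Qed.

Lemma rpow_pos_eq u b : 0 < u -> rpow u b = Rpower u b.
Proof. intros Hu. unfold rpow. destruct (Rle_dec u 0); lra. Qed.

Lemma rpow_npos_eq u b : u <= 0 -> rpow u b = 0.
Proof. intros Hu. unfold rpow. destruct (Rle_dec u 0); lra. Qed.

Lemma rpow_one b : rpow 1 b = 1.
Proof. rewrite rpow_pos_eq by lra. unfold Rpower. rewrite ln_1, Rmult_0_r. apply exp_0. Qed.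

Lemma rpow_plus u a b : 0 <= u -> rpow u (a + b) = rpow u a * rpow u b.
Proof.
  intros [Hu|<-]; [rewrite !rpow_pos_eq by lra; apply Rpower_plus|].
  rewrite !rpow_npos_eq by lra; ring.
Qed.

Lemma locally_pos x (P : R -> Prop) : 0 < x -> (forall y, 0 < y -> P y) -> locally x P.
Proof.
  intros Hx H. exists (mkposreal x Hx). intros y Hy. apply H.
  change (Rabs (y - x) < x) in Hy. apply Rabs_lt_between' in Hy. lra.
Qed.

Lemma locally_neg x (P : R -> Prop) : x < 0 -> (forall y, y < 0 -> P y) -> locally x P.
Proof.
  intros Hx H. assert (Hx' : 0 < - x) by lra. exists (mkposreal (- x) Hx'). intros y Hy.
  apply H. change (Rabs (y - x) < - x) in Hy. apply Rabs_lt_between' in Hy. lra.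
Qed.

Lemma Rpower_small b eps h : 0 < b -> 0 < eps -> 0 < h -> h < Rpower eps (/ b) ->
  Rpower h b < eps.
Proof.
  intros Hb He Hh Hlt.
  replace eps with (Rpower (Rpower eps (/ b)) b) at 1.
  - apply Rlt_Rpower_l; auto.
  - rewrite Rpower_mult. replace (/ b * b) with 1 by (field; lra). apply Rpower_1; auto.
Qed.

Lemma rpow_continuous b x : 0 < b -> continuity_pt (fun u => rpow u b) x.
Proof.
  intros Hb. apply continuity_pt_filterlim. change (continuous (fun u => rpow u b) x).
  destruct (Rtotal_order x 0) as [Hx|[->|Hx]].
  - apply continuous_ext_loc with (fun _ => 0); [|apply continuous_const].
    apply locally_neg; auto. intros; rewrite rpow_npos_eq; lra.
  - apply continuity_pt_filterlim. intros eps Heps.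
    exists (Rpower eps (/ b)). split; [apply exp_pos|].
    intros y [_ Hy]. change (Rabs (y - 0) < Rpower eps (/ b)) in Hy.
    change (Rabs (rpow y b - rpow 0 b) < eps).
    rewrite (rpow_npos_eq 0), !Rminus_0_r in * by lra.
    destruct (Rle_dec y 0); [rewrite rpow_npos_eq, Rabs_R0 by auto; auto|].
    rewrite rpow_pos_eq, Rabs_right by (try left; try apply exp_pos; lra).
    rewrite Rabs_right in Hy by lra. apply Rpower_small; auto. lra.
  - apply continuous_ext_loc with (fun u => Rpower u b).
    + apply locally_pos; auto. intros; rewrite rpow_pos_eq; lra.
    + apply continuity_pt_filterlim, derivable_continuous_pt.
      exists (b * Rpower x (b - 1)). apply derivable_pt_lim_power; auto.
Qed.

Lemma rpow_derive b x : 0 < b -> is_derive (fun u => rpow u (b + 1)) x ((b + 1) * rpow x b).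
Proof.
  intros Hb. destruct (Rtotal_order x 0) as [Hx|[->|Hx]].
  - rewrite rpow_npos_eq, Rmult_0_r by lra.
    apply is_derive_ext_loc with (fun _ => 0).
    + apply locally_neg; auto. intros; rewrite rpow_npos_eq; lra.
    + apply is_derive_Reals, derivable_pt_lim_const.
  - rewrite rpow_npos_eq, Rmult_0_r by lra. apply is_derive_Reals.
    intros eps Heps. exists (mkposreal _ (exp_pos (/ b * ln eps))). intros h Hh0 Hh. simpl in Hh.
    rewrite Rplus_0_l, (rpow_npos_eq 0), Rminus_0_r by lra.
    destruct (Rle_dec h 0).
    + rewrite rpow_npos_eq, Rminus_0_r by auto. unfold Rdiv. rewrite Rmult_0_l, Rabs_R0; auto.
    + rewrite rpow_pos_eq, Rpower_plus, Rpower_1 by lra.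
      replace ((Rpower h b * h - 0) / h) with (Rpower h b) by (field; lra).
      rewrite Rabs_right by (left; apply exp_pos).
      rewrite Rabs_right in Hh by lra. apply Rpower_small; auto; lra.
  - rewrite rpow_pos_eq by lra.
    apply is_derive_ext_loc with (fun u => Rpower u (b + 1)).
    + apply locally_pos; auto. intros; rewrite rpow_pos_eq; lra.
    + apply is_derive_Reals. replace (Rpower x b) with (Rpower x (b + 1 - 1)) by (f_equal; ring).
      apply derivable_pt_lim_power; auto.
Qed.

Lemma pow_sub_derive v d x : is_derive (fun u => (v - u) ^ S d) x (- (INR (S d) * (v - x) ^ d)).
Proof. auto_derive; [exact I|]. destruct d; simpl; unfold Rminus; ring. Qed.

Lemma is_RInt_transport (f g : R -> R) (a b l l' : R) :
  (forall x, Rmin a b < x < Rmax a b -> f x = g x) -> l = l' ->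
  is_RInt f a b l -> is_RInt g a b l'.
Proof. intros Hfg <- H. exact (is_RInt_ext f g a b l Hfg H). Qed.

Definition Beta (x y : R) : R := Gamma x * Gamma y / Gamma (x + y).

Lemma Beta_one x : 0 < x -> Beta x 1 = / x.
Proof.
  intros Hx. unfold Beta. rewrite Gamma_one, Gamma_succ by lra.
  pose proof (Gamma_pos x Hx). field. lra.
Qed.

Lemma Beta_shift x y : 0 < x -> 0 < y -> y * Beta (x + 1) y = x * Beta x (y + 1).
Proof.
  intros Hx Hy. unfold Beta. rewrite !Gamma_succ by lra.
  replace (x + 1 + y) with (x + (y + 1)) by ring.
  pose proof (Gamma_pos (x + (y + 1)) ltac:(lra)). field. lra.
Qed.

(** Integration by parts: [int_0^v u^a (v-u)^(d+1) du = (d+1)/(a+1) int_0^v u^(a+1) (v-u)^d du];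
    the boundary terms vanish at both ends. *)
Lemma integral_by_parts_power a v d I : 0 < a ->
  is_RInt (fun u => rpow u (a + 1) * (v - u) ^ d) 0 v I ->
  is_RInt (fun u => rpow u a * (v - u) ^ S d) 0 v (INR (S d) / (a + 1) * I).
Proof.
  intros Ha HI.
  set (F := fun u => / (a + 1) * (rpow u (a + 1) * (v - u) ^ S d)).
  set (dF := fun u => / (a + 1) * ((a + 1) * rpow u a * (v - u) ^ S d
                                  + rpow u (a + 1) * (- (INR (S d) * (v - u) ^ d)))).
  assert (Hparts : is_RInt dF 0 v (minus (F v) (F 0))).
  { apply (is_RInt_derive F dF).
    - intros x _. apply is_derive_scal.
      apply (is_derive_mult (fun u => rpow u (a + 1)) (fun u => (v - u) ^ S d)).
      + apply rpow_derive; auto.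
      + apply pow_sub_derive.
      + intros; apply Rmult_comm.
    - intros x _. apply continuity_pt_filterlim. unfold dF.
      assert (Hpow : forall k, continuity_pt (fun u => (v - u) ^ k) x)
        by (intros; apply derivable_continuous_pt; reg).
      repeat first [ apply Hpow | apply rpow_continuous; lra
                   | apply continuity_pt_scal | apply continuity_pt_plus
                   | apply continuity_pt_mult | apply continuity_pt_opp ]. }
  assert (Hsum := is_RInt_plus _ _ _ _ _ _ Hparts (is_RInt_scal _ _ _ (INR (S d) / (a + 1)) _ HI)).
  eapply is_RInt_transport; [| | exact Hsum].
  - intros x _. change (plus ?x ?y) with (x + y). change (scal ?x ?y) with (x * y).
    unfold dF. field. lra.
  - change (plus ?x ?y) with (x + y). change (minus ?x ?y) with (x - y).
    change (scal ?x ?y) with (x * y). unfold F.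
    rewrite (rpow_npos_eq 0), Rminus_diag, pow_i by (lra || lia). field. lra.
Qed.

Lemma beta_integral d : forall a v, 0 < a -> 0 <= v ->
  is_RInt (fun u => rpow u a * (v - u) ^ d) 0 v
    (rpow v (a + INR d + 1) * Beta (a + 1) (INR d + 1)).
Proof.
  induction d as [|d IH]; intros a v Ha Hv.
  - set (F := fun u => / (a + 1) * rpow u (a + 1)).
    assert (H : is_RInt (fun u => / (a + 1) * ((a + 1) * rpow u a)) 0 v (minus (F v) (F 0))).
    { apply (is_RInt_derive F).
      - intros x _. apply is_derive_scal, rpow_derive; auto.
      - intros x _. apply continuity_pt_filterlim.
        apply continuity_pt_scal, continuity_pt_scal, rpow_continuous; auto. }
    eapply is_RInt_transport; [| | exact H].
    + intros x _. simpl. field. lra.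
    + unfold minus, plus, opp, F; simpl. rewrite (rpow_npos_eq 0) by lra.
      rewrite !Rplus_0_r, Rplus_0_l, Beta_one by lra. ring.
  - eapply is_RInt_transport;
      [| | exact (integral_by_parts_power a v d _ Ha (IH (a + 1) v ltac:(lra) Hv))]; [easy|].
    pose proof (pos_INR d).
    assert (HB := Beta_shift (a + 1) (INR d + 1) ltac:(lra) ltac:(lra)).
    replace (Beta (a + 1) (INR (S d) + 1))
      with ((INR d + 1) * Beta (a + 1 + 1) (INR d + 1) / (a + 1))
      by (rewrite S_INR, HB; field; lra).
    rewrite S_INR. replace (a + 1 + INR d + 1) with (a + (INR d + 1) + 1) by ring.
    field. lra.
Qed.

Lemma infinite_sum_scal f g C l :
  infinite_sum f l -> (forall k, g k = C * f k) -> infinite_sum g (C * l).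
Proof.
  intros H E. apply is_lim_seq_Reals. apply is_lim_seq_Reals in H.
  apply is_lim_seq_ext with (fun K => C * sum_f_R0 f K); [|exact (is_lim_seq_scal_l _ C l H)].
  intros K. induction K as [|K IH]; simpl; rewrite E; [|rewrite <- IH]; ring.
Qed.

Lemma series_term_hyp n j nu k : (j <= n)%nat -> 0 < nu ->
  series_term n j nu k
  = Gamma (INR n + 1 - INR j) / (Gamma (nu + 1) * Gamma (nu + INR n + 1))
    * hyp_term (- nu) (INR n + 1 - INR j) (nu + INR n + 1) k.
Proof.
  intros Hjn Hnu. unfold series_term, hyp_term.
  assert (Em : INR (S (n - j)) = INR n + 1 - INR j) by (rewrite S_INR, minus_INR by lia; ring).
  assert (Hm : 0 < INR n + 1 - INR j) by (rewrite <- Em; apply lt_0_INR; lia).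
  pose proof (pos_INR n).
  replace (INR n + INR k + 1 - INR j) with ((INR n + 1 - INR j) + INR k) by ring.
  replace (nu + INR n + INR k + 1) with ((nu + INR n + 1) + INR k) by ring.
  rewrite !Gamma_rising, Gamma_nat, RGamma_shift_down by lra.
  rewrite rising_reflect.
  pose proof (Gamma_pos (INR n + 1 - INR j) Hm). pose proof (Gamma_pos (nu + 1) ltac:(lra)).
  pose proof (Gamma_pos (nu + INR n + 1) ltac:(lra)).
  pose proof (rising_pos (nu + INR n + 1) k ltac:(lra)). pose proof (lt_0_INR _ (lt_O_fact k)).
  assert (Hsq : (-1) ^ k * (-1) ^ k = 1)
    by (rewrite <- Rpow_mult_distr; replace (-1 * -1) with 1 by ring; apply pow1).
  match goal with |- _ = ?r => transitivity ((-1) ^ k * (-1) ^ k * r) end.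
  - field. repeat split; lra.
  - rewrite Hsq. ring.
Qed.

Lemma series_sum n j nu : (1 <= j)%nat -> (j <= n)%nat -> 0 < nu ->
  infinite_sum (series_term n j nu)
    (Gamma (INR n + 1 - INR j) * Gamma (2 * nu + INR j)
     / (Gamma (nu + 1) * Gamma (nu + INR j) * Gamma (2 * nu + INR n + 1))).
Proof.
  intros Hj Hjn Hnu.
  assert (Em : INR (S (n - j)) = INR n + 1 - INR j) by (rewrite S_INR, minus_INR by lia; ring).
  assert (H1j : 1 <= INR j) by (apply (le_INR 1); lia).
  assert (Hjn' : INR j <= INR n) by (apply le_INR; lia).
  assert (Hgauss := gauss_sum (- nu) (nu + INR n + 1) (S (n - j))
                      ltac:(lra) ltac:(rewrite Em; lra)).
  rewrite Em in Hgauss.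
  replace (nu + INR n + 1 - - nu - (INR n + 1 - INR j)) with (2 * nu + INR j) in Hgauss by ring.
  replace (nu + INR n + 1 - - nu) with (2 * nu + INR n + 1) in Hgauss by ring.
  replace (nu + INR n + 1 - (INR n + 1 - INR j)) with (nu + INR j) in Hgauss by ring.
  pose proof (Gamma_pos (nu + 1) ltac:(lra)). pose proof (Gamma_pos (nu + INR n + 1) ltac:(lra)).
  pose proof (Gamma_pos (nu + INR j) ltac:(lra)).
  pose proof (Gamma_pos (2 * nu + INR n + 1) ltac:(lra)).
  match goal with |- infinite_sum _ ?l =>
    replace l with (Gamma (INR n + 1 - INR j) / (Gamma (nu + 1) * Gamma (nu + INR n + 1))
      * (Gamma (nu + INR n + 1) * Gamma (2 * nu + INR j)
         / (Gamma (2 * nu + INR n + 1) * Gamma (nu + INR j)))) by (field; lra) end.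
  apply (infinite_sum_scal _ _ _ _ Hgauss). intros k.
  apply series_term_hyp; lia || lra.
Qed.

Lemma has_RInt_of_is_RInt f a b I : is_RInt f a b I -> has_RInt f a b I.
Proof.
  intros H. assert (ex : ex_RInt f a b) by (exists I; auto).
  exists (ex_RInt_Reals_0 _ _ _ ex). rewrite <- RInt_Reals. now apply is_RInt_unique.
Qed.

Lemma rpow_plus_nat u b p : 0 < u -> rpow u (b + INR p) = rpow u b * u ^ p.
Proof. intros Hu. rewrite !rpow_pos_eq, Rpower_plus, Rpower_pow by lra. reflexivity. Qed.

Definition os_norm (n i j : nat) : R :=
  Gamma (INR n + 1) / (Gamma (INR i) * Gamma (INR j - INR i) * Gamma (INR n + 1 - INR j)).

(** Inner integral in [u]: an incomplete Beta integral in the variable [u <= v]. *)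
Lemma os_inner_integral n i j nu v :
  (1 <= i)%nat -> (i < j)%nat -> 0 < nu -> 0 <= v ->
  is_RInt (fun u => os_density n i j u v * rpow u nu * rpow v nu) 0 v
    (os_norm n i j * (1 - v) ^ (n - j) * rpow v nu
     * (rpow v (nu + INR j - 1) * Beta (nu + INR i) (INR j - INR i))).
Proof.
  intros Hi Hij Hnu Hv.
  assert (Ei : INR (i - 1) = INR i - 1) by (rewrite minus_INR by lia; reflexivity).
  assert (Eji : INR (j - i - 1) = INR j - INR i - 1) by (rewrite !minus_INR by lia; reflexivity).
  assert (H1i : 1 <= INR i) by (apply (le_INR 1); lia).
  assert (Hin := beta_integral (j - i - 1) (nu + INR i - 1) v ltac:(lra) Hv).
  rewrite Eji in Hin.
  replace (nu + INR i - 1 + (INR j - INR i - 1) + 1) with (nu + INR j - 1) in Hin by ring.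
  replace (nu + INR i - 1 + 1) with (nu + INR i) in Hin by ring.
  replace (INR j - INR i - 1 + 1) with (INR j - INR i) in Hin by ring.
  eapply is_RInt_transport;
    [| | exact (is_RInt_scal _ _ _ (os_norm n i j * (1 - v) ^ (n - j) * rpow v nu) _ Hin)].
  - intros u Hu. rewrite Rmin_left, Rmax_right in Hu by lra.
    change (scal ?x ?y) with (x * y). unfold os_density. fold (os_norm n i j).
    replace (nu + INR i - 1) with (nu + INR (i - 1)) by (rewrite Ei; ring).
    rewrite rpow_plus_nat by lra. ring.
  - reflexivity.
Qed.

(** The moment as an iterated integral: the outer integral in [v] of the inner
    one is a complete Beta integral. *)
Lemma os_moment_closed n i j nu :
  (1 <= i)%nat -> (i < j)%nat -> (j <= n)%nat -> 0 < nu ->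
  os_moment_is n i j nu
    (Gamma (INR n + 1) * Gamma (nu + INR i) * Gamma (2 * nu + INR j)
     / (Gamma (INR i) * Gamma (nu + INR j) * Gamma (2 * nu + INR n + 1))).
Proof.
  intros Hi Hij Hjn Hnu.
  assert (Enj : INR (n - j) = INR n - INR j) by (rewrite minus_INR by lia; reflexivity).
  assert (H1i : 1 <= INR i) by (apply (le_INR 1); lia).
  assert (Hij' : INR i + 1 <= INR j) by (rewrite <- S_INR; apply le_INR; lia).
  assert (Hjn' : INR j <= INR n) by (apply le_INR; lia).
  set (B1 := Beta (nu + INR i) (INR j - INR i)).
  exists (fun v => os_norm n i j * (1 - v) ^ (n - j) * rpow v nu * (rpow v (nu + INR j - 1) * B1)).
  split; [intros v Hv; apply has_RInt_of_is_RInt, os_inner_integral; lra || lia|].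
  apply has_RInt_of_is_RInt.
  assert (Hout := beta_integral (n - j) (2 * nu + INR j - 1) 1 ltac:(lra) ltac:(lra)).
  rewrite rpow_one, Enj in Hout.
  replace (2 * nu + INR j - 1 + 1) with (2 * nu + INR j) in Hout by ring.
  eapply is_RInt_transport; [| | exact (is_RInt_scal _ _ _ (os_norm n i j * B1) _ Hout)].
  - intros v Hv. rewrite Rmin_left, Rmax_right in Hv by lra. change (scal ?x ?y) with (x * y).
    replace (2 * nu + INR j - 1) with (nu + (nu + INR j - 1)) by ring.
    rewrite rpow_plus by lra. ring.
  - change (scal ?x ?y) with (x * y). unfold os_norm, B1, Beta.
    replace (nu + INR i + (INR j - INR i)) with (nu + INR j) by ring.
    replace (2 * nu + INR j + (INR n - INR j + 1)) with (2 * nu + INR n + 1) by ring.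
    replace (INR n - INR j + 1) with (INR n + 1 - INR j) by ring.
    pose proof (Gamma_pos (INR i) ltac:(lra)). pose proof (Gamma_pos (INR j - INR i) ltac:(lra)).
    pose proof (Gamma_pos (INR n + 1 - INR j) ltac:(lra)).
    pose proof (Gamma_pos (nu + INR j) ltac:(lra)).
    pose proof (Gamma_pos (2 * nu + INR n + 1) ltac:(lra)).
    field. repeat split; lra.
Qed.

Theorem mainTheorem4 (n i j : nat) (nu : R)
  (hn : (2 <= n)%nat) (hi : (1 <= i)%nat) (hij : (i < j)%nat) (hj : (j <= n)%nat)
  (hnu : 0 < nu) :
  exists S : R,
    infinite_sum (series_term n j nu) S /\
    os_moment_is n i j nu
      (Gamma (INR n + 1) * Gamma (nu + 1) * Gamma (nu + INR i)
       / (Gamma (INR i) * Gamma (INR n + 1 - INR j)) * S).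
Proof.
  exists (Gamma (INR n + 1 - INR j) * Gamma (2 * nu + INR j)
          / (Gamma (nu + 1) * Gamma (nu + INR j) * Gamma (2 * nu + INR n + 1))).
  split; [apply series_sum; lia || lra|].
  (* the two closed forms agree after cancelling [Gamma (nu+1)] and [Gamma (n+1-j)] *)
  assert (H1i : 1 <= INR i) by (apply (le_INR 1); lia).
  assert (Hjn : INR j <= INR n) by (apply le_INR; lia).
  pose proof (pos_INR j).
  pose proof (Gamma_pos (nu + 1) ltac:(lra)). pose proof (Gamma_pos (INR i) ltac:(lra)).
  pose proof (Gamma_pos (INR n + 1 - INR j) ltac:(lra)).
  pose proof (Gamma_pos (nu + INR j) ltac:(lra)).
  pose proof (Gamma_pos (2 * nu + INR n + 1) ltac:(lra)).
  match goal with |- os_moment_is _ _ _ _ ?E =>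
    replace E with (Gamma (INR n + 1) * Gamma (nu + INR i) * Gamma (2 * nu + INR j)
       / (Gamma (INR i) * Gamma (nu + INR j) * Gamma (2 * nu + INR n + 1))) by (field; lra) end.
  apply os_moment_closed; assumption.
Qed.
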